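(* Let $R$ be a partially ordered commutative ring with $\mathbb{N}\subseteq\mathrm{Loc}(R)$, let $\varphi\in\mathcal{K}(R)$ and let $U$ be a neighbourhood of $\varphi$ in $\mathcal{K}(R)$. Then there exists $b\in R^{\mathrm{bd}}_{\mathrm{loc}}$ such that $\varphi\in\mathrm{O}_{b,]-\infty,0[}\subseteq U$, where $\mathrm{O}_{b,]-\infty,0[}=\{\psi\in\mathcal{K}(R):\psi(b)<0\}$.
   Context: Rings are commutative with unit; ring morphisms are unital. A partially ordered commutative ring is a commutative ring $R$ with partial order $\le$, $r\le s\Rightarrow r+t\le s+t$, positive cone $R^+$ closed under multiplication and containing all squares. $\mathbb{N}=\{1,2,\dots\}$, $\mathbb{N}_0=\mathbb{N}\cup\{0\}$. $\mathrm{Loc}(R)$ is the set of $s\in1+R^+$ such that $rs\in R^+$ implies $r\in R^+$ for all $r\in R$; $\mathbb{N}\subseteq\mathrm{Loc}(R)$ means $n\cdot1\in\mathrm{Loc}(R)$ for all $n$. $R_{\mathrm{loc}}$: fractions $r/s$ ($r\in R$, $s\in\mathrm{Loc}(R)$), $r/s=r'/s'$ iff $rs'=r's$, usual operations, ordered by $p/q\le r/s$ iff $ps\le rq$. $R^{\mathrm{bd}}_{\mathrm{loc}}=\{a\in R_{\mathrm{loc}}:\exists n\in\mathbb{N}_0,\ -n\le a\le n\}$, a subring. $\mathcal{K}(R)$ is the set of ring morphisms $\varphi\colon R^{\mathrm{bd}}_{\mathrm{loc}}\to\mathbb{R}$ with $\varphi(a)\ge0$ for all $a\ge 0$, with the topology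 generated by the subbasis of sets $\{\varphi:\varphi(a)\in V\}$, $a\in R^{\mathrm{bd}}_{\mathrm{loc}}$, $V\subseteq\mathbb{R}$ open. *)

From HB Require Import structures.
From mathcomp Require Import all_boot all_order all_algebra.
From mathcomp Require Import all_classical all_reals.
From mathcomp Require Import topology normedtype.
Set Implicit Arguments. Unset Strict Implicit. Unset Printing Implicit Defensive.
Import Order.TTheory GRing.Theory Num.Theory.
Import numFieldNormedType.Exports.
Local Open Scope ring_scope.

Section PORing.
Variable R : comPzRingType.

Definition pocring (le : R -> R -> Prop) : Prop :=
  (forall r, le r r) /\
  (forall r s, le r s -> le s r -> r = s) /\
  (forall r s t, le r s -> le s t -> le r t) /\
  (forall r s t, le r s -> le (r + t) (s + t)) /\
  (forall r s, le 0 r -> le 0 s -> le 0 (r * s)) /\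
  (forall r, le 0 (r * r)).

Variable le : R -> R -> Prop.

Definition Loc (s : R) : Prop :=
  le 0 (s - 1) /\ (forall r, le 0 (r * s) -> le 0 r).

Record frac := Frac { fnum : R; fden : R; fdenP : Loc fden }.

Definition frac_eq (a b : frac) : Prop := fnum a * fden b = fnum b * fden a.

(* bounded: exists n in N_0, -n <= a <= n, i.e. (-n)/1 <= r/s <= n/1,
   i.e. (-n) s <= r 1 and r 1 <= n s *)
Definition frac_bounded (a : frac) : Prop :=
  exists n : nat, le ((- n%:R) * fden a) (fnum a * 1) /\
                  le (fnum a * 1) (n%:R * fden a).

(* R^bd_loc, represented by bounded representatives *)
Definition bdfrac := {a : frac | frac_bounded a}.

(* Ring morphisms R^bd_loc -> Rr that are positive, written out on
   representatives: well defined on equivalence classes, unital, additive,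
   multiplicative, and nonnegative on a >= 0 (0/1 <= r/s iff 0 s <= r 1). *)
Definition is_Kchar (Rr : realType) (phi : bdfrac -> Rr) : Prop :=
  [/\ (forall a b : bdfrac, frac_eq (proj1_sig a) (proj1_sig b) -> phi a = phi b),
      (forall c : bdfrac, fnum (proj1_sig c) * 1 = 1 * fden (proj1_sig c) -> phi c = 1),
      (* c = a + b = (r s' + r' s)/(s s') *)
      (forall a b c : bdfrac,
          fnum (proj1_sig c) * (fden (proj1_sig a) * fden (proj1_sig b)) =
          (fnum (proj1_sig a) * fden (proj1_sig b) + fnum (proj1_sig b) * fden (proj1_sig a)) * fden (proj1_sig c) ->
          phi c = phi a + phi b),
      (* c = a * b = (r r')/(s s') *)
      (forall a b c : bdfrac,
          fnum (proj1_sig c) * (fden (proj1_sig a) * fden (proj1_sig b)) =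
          (fnum (proj1_sig a) * fnum (proj1_sig b)) * fden (proj1_sig c) ->
          phi c = phi a * phi b) &
      (forall a : bdfrac, le (0 * fden (proj1_sig a)) (fnum (proj1_sig a) * 1) -> 0 <= phi a)].

Definition Kspace (Rr : realType) := {phi : bdfrac -> Rr | is_Kchar phi}.

End PORing.

Inductive gen_open (T : Type) (S : set (set T)) : set T -> Prop :=
  | gen_open_sub A : S A -> gen_open S A
  | gen_open_T : gen_open S setT
  | gen_open_I A B : gen_open S A -> gen_open S B -> gen_open S (A `&` B)
  | gen_open_U (F : set (set T)) :
      (forall A, F A -> gen_open S A) -> gen_open S (\bigcup_(A in F) A).

Definition K_subbasis (R : comPzRingType) (le : R -> R -> Prop) (Rr : realType)
  : set (set (Kspace le Rr)) :=
  fun A => exists (a : bdfrac le) (V : set Rr),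
      open V /\ A = (fun psi : Kspace le Rr => V (proj1_sig psi a)).

Definition K_open (R : comPzRingType) (le : R -> R -> Prop) (Rr : realType)
  (W : set (Kspace le Rr)) : Prop := gen_open (@K_subbasis R le Rr) W.

Definition K_nbhd (R : comPzRingType) (le : R -> R -> Prop) (Rr : realType)
  (phi : Kspace le Rr) (U : set (Kspace le Rr)) : Prop :=
  exists W, K_open W /\ W phi /\ (forall psi, W psi -> U psi).

(* An open neighbourhood of phi contains a box
   {psi | |psi(a) - phi(a)| < e for all a in s} with s finite.  Pick k in N
   with (|s| + 2) / e < k, let m_a = floor (k phi(a)) and
   b = sum_(a in s) (k a - m_a)^2 - (|s| + 1), an element of R^bd_loc.
   Then phi(b) <= |s| - (|s| + 1) < 0, whereas psi(b) < 0 forces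
   (k psi(a) - m_a)^2 < |s| + 1, hence k |psi(a) - phi(a)| < |s| + 2 < k e,
   for every a in s. *)

From Pilot Require Import Defs.
From HB Require Import structures.
From mathcomp Require Import all_boot all_order all_algebra.
From mathcomp Require Import all_classical all_reals.
From mathcomp Require Import topology normedtype.
From mathcomp Require Import ring lra.
Import Order.TTheory GRing.Theory Num.Theory.
Import numFieldNormedType.Exports.
Local Open Scope ring_scope.

Section PartiallyOrderedRing.
Variables (R : comPzRingType) (le : R -> R -> Prop).
Hypothesis HR : pocring le.

Lemma po_refl r : le r r.
Proof. by case: HR. Qed.

Lemma po_trans r s t : le r s -> le s t -> le r t.
Proof. by case: HR => _ [_ [trans _]]; apply: trans. Qed.

Lemma po_addr t r s : le r s -> le (r + t) (s + t).
Proof. by case: HR => _ [_ [_ [addr _]]]; apply: addr. Qed.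

Lemma po_mul_ge0 r s : le 0 r -> le 0 s -> le 0 (r * s).
Proof. by case: HR => _ [_ [_ [_ [mul _]]]]; apply: mul. Qed.

Lemma po_sqr_ge0 r : le 0 (r * r).
Proof. by case: HR => _ [_ [_ [_ [_ sqr]]]]; apply: sqr. Qed.

Lemma po_subr_ge0 r s : le r s <-> le 0 (s - r).
Proof.
split=> [/(po_addr (- r))|/(po_addr r)]; first by rewrite subrr.
by rewrite add0r subrK.
Qed.

Lemma po_add_ge0 r s : le 0 r -> le 0 s -> le 0 (r + s).
Proof. by move=> /(po_addr s); rewrite add0r => /[swap]; apply: po_trans. Qed.

Lemma po_nat_ge0 n : le 0 n%:R.
Proof.
elim: n => [|n IHn]; first exact: po_refl.
by rewrite mulrS; apply: po_add_ge0 IHn; rewrite -[1]mulr1; apply: po_sqr_ge0.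
Qed.

Lemma Loc_ge0 {s : R} : Loc le s -> le 0 s.
Proof.
case=> s1_ge0 _; rewrite -(subrK 1 s).
by apply: po_add_ge0 s1_ge0 _; rewrite -[1]mulr1; apply: po_sqr_ge0.
Qed.

Lemma LocM {s t : R} : Loc le s -> Loc le t -> Loc le (s * t).
Proof.
case=> s1_ge0 sK [t1_ge0 tK]; split; last by move=> r; rewrite mulrA => /tK /sK.
have -> : s * t - 1 = (s - 1) * (t - 1) + ((s - 1) + (t - 1)) by ring.
by apply: po_add_ge0; [apply: po_mul_ge0 | apply: po_add_ge0].
Qed.

Hypothesis HN : forall n : nat, Loc le n.+1%:R.

Lemma Loc1 : Loc le 1.
Proof. by have := HN 0; rewrite mulr1n. Qed.

Lemma po_halve r : le 0 (r * 2%:R) -> le 0 r.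
Proof. by case: (HN 1) => _; apply. Qed.

Definition frac_add (x y : Defs.frac le) : Defs.frac le :=
  Frac (fnum x * fden y + fnum y * fden x) (LocM (fdenP x) (fdenP y)).
Definition frac_mul (x y : Defs.frac le) : Defs.frac le :=
  Frac (fnum x * fnum y) (LocM (fdenP x) (fdenP y)).
Definition frac_opp (x : Defs.frac le) : Defs.frac le := Frac (- fnum x) (fdenP x).
Definition frac_nat (n : nat) : Defs.frac le := Frac n%:R Loc1.

Lemma frac_boundedP (x : Defs.frac le) : frac_bounded x <->
  exists n : nat, le 0 (n%:R * fden x + fnum x) /\ le 0 (n%:R * fden x - fnum x).
Proof.
split=> -[n [lo hi]]; exists n.
  by move: lo hi => /po_subr_ge0 + /po_subr_ge0; rewrite mulr1 mulNr opprK addrC.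
by split; apply/po_subr_ge0; rewrite mulr1 // mulNr opprK addrC.
Qed.

Lemma frac_bounded_add {x y : Defs.frac le} :
  frac_bounded x -> frac_bounded y -> frac_bounded (frac_add x y).
Proof.
move=> /frac_boundedP[n [x_lo x_hi]] /frac_boundedP[m [y_lo y_hi]].
have x_ge0 := Loc_ge0 (fdenP x); have y_ge0 := Loc_ge0 (fdenP y).
apply/frac_boundedP; exists (n + m)%N; rewrite /= natrD; split.
  have -> : (n%:R + m%:R) * (fden x * fden y) + (fnum x * fden y + fnum y * fden x)
    = (n%:R * fden x + fnum x) * fden y + (m%:R * fden y + fnum y) * fden x by ring.
  by apply: po_add_ge0; apply: po_mul_ge0.
have -> : (n%:R + m%:R) * (fden x * fden y) - (fnum x * fden y + fnum y * fden x)
  = (n%:R * fden x - fnum x) * fden y + (m%:R * fden y - fnum y) * fden x by ring.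
by apply: po_add_ge0; apply: po_mul_ge0.
Qed.

Lemma frac_bounded_mul {x y : Defs.frac le} :
  frac_bounded x -> frac_bounded y -> frac_bounded (frac_mul x y).
Proof.
move=> /frac_boundedP[n [x_lo x_hi]] /frac_boundedP[m [y_lo y_hi]].
apply/frac_boundedP; exists (n * m)%N; rewrite /= natrM; split; apply: po_halve.
  have -> : (n%:R * m%:R * (fden x * fden y) + fnum x * fnum y) * 2%:R
    = (n%:R * fden x + fnum x) * (m%:R * fden y + fnum y)
      + (n%:R * fden x - fnum x) * (m%:R * fden y - fnum y) by ring.
  by apply: po_add_ge0; apply: po_mul_ge0.
have -> : (n%:R * m%:R * (fden x * fden y) - fnum x * fnum y) * 2%:R
  = (n%:R * fden x + fnum x) * (m%:R * fden y - fnum y)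
    + (n%:R * fden x - fnum x) * (m%:R * fden y + fnum y) by ring.
by apply: po_add_ge0; apply: po_mul_ge0.
Qed.

Lemma frac_bounded_opp {x : Defs.frac le} : frac_bounded x -> frac_bounded (frac_opp x).
Proof. by move=> /frac_boundedP[n [lo hi]]; apply/frac_boundedP; exists n; rewrite /= opprK. Qed.

Lemma frac_bounded_nat n : frac_bounded (frac_nat n).
Proof.
apply/frac_boundedP; exists n; rewrite /= mulr1 subrr.
by split; [apply: po_add_ge0; apply: po_nat_ge0 | apply: po_refl].
Qed.

Definition bd_add (x y : bdfrac le) : bdfrac le :=
  exist _ (frac_add (sval x) (sval y)) (frac_bounded_add (svalP x) (svalP y)).
Definition bd_mul (x y : bdfrac le) : bdfrac le :=
  exist _ (frac_mul (sval x) (sval y)) (frac_bounded_mul (svalP x) (svalP y)).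
Definition bd_opp (x : bdfrac le) : bdfrac le :=
  exist _ (frac_opp (sval x)) (frac_bounded_opp (svalP x)).
Definition bd_nat (n : nat) : bdfrac le := exist _ (frac_nat n) (frac_bounded_nat n).
Definition bd_int (z : int) : bdfrac le :=
  match z with Posz n => bd_nat n | Negz n => bd_opp (bd_nat n.+1) end.
Definition bd_sum {T : Type} (s : seq T) (F : T -> bdfrac le) : bdfrac le :=
  foldr (fun a acc => bd_add (F a) acc) (bd_nat 0) s.

Definition box_witness (k : nat) (m : bdfrac le -> int) (s : seq (bdfrac le)) :=
  let t a := bd_add (bd_mul (bd_nat k) a) (bd_int (- m a)) in
  bd_add (bd_sum s (fun a => bd_mul (t a) (t a))) (bd_opp (bd_nat (size s).+1)).

Section Character.
Variables (F : realType) (f : bdfrac le -> F).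
Hypothesis Hf : is_Kchar f.

Lemma Kchar_add x y : f (bd_add x y) = f x + f y.
Proof. by case: Hf => _ _ add _ _; apply: add => /=; ring. Qed.

Lemma Kchar_mul x y : f (bd_mul x y) = f x * f y.
Proof. by case: Hf => _ _ _ mul _; apply: mul => /=; ring. Qed.

Lemma Kchar_nat n : f (bd_nat n) = n%:R.
Proof.
have f0 : f (bd_nat 0) = 0.
  have : f (bd_nat 0) = f (bd_nat 0) + f (bd_nat 0).
    by case: Hf => _ _ add _ _; apply: add => /=; ring.
  lra.
elim: n => [//|n IHn].
have -> : f (bd_nat n.+1) = f (bd_nat n) + f (bd_nat 1).
  by case: Hf => _ _ add _ _; apply: add => /=; rewrite -addn1 natrD; ring.
by case: Hf => _ f1 _ _ _; rewrite IHn f1 /= ?mulr1 // -addn1 natrD.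
Qed.

Lemma Kchar_opp x : f (bd_opp x) = - f x.
Proof.
have : f (bd_nat 0) = f x + f (bd_opp x).
  by case: Hf => _ _ add _ _; apply: add => /=; ring.
rewrite Kchar_nat; lra.
Qed.

Lemma Kchar_int z : f (bd_int z) = z%:~R.
Proof. by case: z => n /=; rewrite ?Kchar_opp Kchar_nat // NegzE mulrNz. Qed.

Lemma Kchar_sum (T : Type) (s : seq T) (G : T -> bdfrac le) :
  f (bd_sum s G) = \sum_(a <- s) f (G a).
Proof.
elim: s => [|a s IHs] /=; first by rewrite big_nil Kchar_nat.
by rewrite Kchar_add IHs big_cons.
Qed.

Lemma Kchar_box_witness k m s : f (box_witness k m s) =
  \sum_(a <- s) (k%:R * f a - (m a)%:~R) ^+ 2 - (size s).+1%:R.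
Proof.
rewrite Kchar_add Kchar_sum Kchar_opp Kchar_nat; congr (_ - _).
apply: eq_bigr => a _.
by rewrite Kchar_mul Kchar_add Kchar_mul Kchar_int Kchar_nat mulrNz expr2.
Qed.

End Character.
End PartiallyOrderedRing.

Arguments box_witness {R le} HR HN k m s.
Arguments Kchar_box_witness {R le} HR HN {F f} Hf k m s.

Lemma ler_term_sum (F : numDomainType) (T : Type) (s : seq T) (h : T -> F) a :
  (forall x, 0 <= h x) -> List.In a s -> h a <= \sum_(x <- s) h x.
Proof.
move=> h_ge0; elim: s => [|x s IHs] //= [->|a_s]; rewrite big_cons.
  by rewrite lerDl sumr_ge0.
by rewrite (le_trans (IHs a_s)) // lerDr.
Qed.

Arguments ler_term_sum {F T s h a}.

Section FloorApproximation.
Variable F : archiRealFieldType.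

Lemma floor_err_sqr_le1 (x : F) : (x - (Num.floor x)%:~R) ^+ 2 <= 1.
Proof. by have /andP[lo hi] := floor_itv x; rewrite intrD in hi; nra. Qed.

Lemma floor_err_sum_le (T : Type) (s : seq T) (x : T -> F) :
  \sum_(a <- s) (x a - (Num.floor (x a))%:~R) ^+ 2 <= (size s)%:R.
Proof.
by rewrite -sum1_size natr_sum; apply: ler_sum => a _; apply: floor_err_sqr_le1.
Qed.

Lemma floor_approx_close (c : nat) (k x y : F) : 0 < k ->
  (k * y - (Num.floor (k * x))%:~R) ^+ 2 < c.+1%:R -> `|y - x| < c.+2%:R / k.
Proof.
move=> k_gt0 y_close; have /andP[lo hi] := floor_itv (k * x); rewrite intrD in hi.
set m := (Num.floor (k * x))%:~R in lo hi y_close.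
have c1_ge1 : 1 <= c.+1%:R :> F by rewrite ler1n.
have : `|k * y - m| < c.+1%:R by rewrite ltr_norml; apply/andP; split; nra.
rewrite ltr_pdivlMr // -{2}(gtr0_norm k_gt0) -normrM -addn1 natrD !ltr_norml.
by move=> /andP[? ?]; apply/andP; split; nra.
Qed.

End FloorApproximation.

Arguments floor_err_sum_le {F T}.
Arguments floor_approx_close {F} c {k x y}.

Section KTopology.
Variables (R : comPzRingType) (le : R -> R -> Prop) (F : realType).
Local Open Scope classical_set_scope.

Definition K_box (phi : Kspace le F) (s : seq (bdfrac le)) (e : F) : set (Kspace le F) :=
  [set psi | forall a, List.In a s -> `|sval psi a - sval phi a| < e].

Lemma K_open_box (W : set (Kspace le F)) phi : K_open W -> W phi ->
  exists s e, 0 < e /\ K_box phi s e `<=` W.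
Proof.
elim=> {W} [A [a [V [V_open ->]]] /= V_phi | _
  | A B _ IHA _ IHB [/IHA + /IHB] | G _ IHG [A GA A_phi]].
- have /nbhs_ballP[e e_gt0 e_V] := V_open _ V_phi.
  exists [:: a], e; split=> // psi psi_box; apply: e_V.
  by rewrite -ball_normE /ball_ /= distrC; apply: psi_box; left.
- by exists [::], 1.
- move=> [s1 [e1 [e1_gt0 box_A]]] [s2 [e2 [e2_gt0 box_B]]].
  exists (s1 ++ s2), (Num.min e1 e2); split; first by rewrite lt_min e1_gt0.
  move=> psi psi_box; split; [apply: box_A | apply: box_B] => a a_s.
    by have := psi_box a (List.in_or_app _ _ _ (or_introl a_s)); rewrite lt_min => /andP[].
  by have := psi_box a (List.in_or_app _ _ _ (or_intror a_s)); rewrite lt_min => /andP[].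
- have [s [e [e_gt0 box_A]]] := IHG A GA A_phi.
  by exists s, e; split=> // psi /box_A A_psi; exists A.
Qed.

End KTopology.

Arguments K_box {R le F}.
Arguments K_open_box {R le F W phi}.

Theorem proposition21 (R : comPzRingType) (le : R -> R -> Prop)
  (HR : pocring le) (HN : forall n : nat, Loc le (n.+1)%:R)
  (Rr : realType) (phi : Kspace le Rr) (U : set (Kspace le Rr))
  (HU : K_nbhd phi U) :
  exists b : bdfrac le,
    proj1_sig phi b < 0 /\ (forall psi : Kspace le Rr, proj1_sig psi b < 0 -> U psi).
Proof.
case: HU => W [W_open [W_phi W_U]].
have [s [e [e_gt0 box_W]]] := K_open_box W_open W_phi.
pose k := Num.Def.archi_bound ((size s).+2%:R / e).
have k_large : (size s).+2%:R / e < k%:R by apply/archi_boundP/divr_ge0/ltW.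
have k_gt0 : 0 < k%:R :> Rr by apply: le_lt_trans k_large; apply/divr_ge0/ltW.
pose m a := Num.floor (k%:R * sval phi a).
have val (psi : Kspace le Rr) : sval psi (box_witness HR HN k m s) =
    \sum_(a <- s) (k%:R * sval psi a - (m a)%:~R) ^+ 2 - (size s).+1%:R.
  by rewrite (Kchar_box_witness HR HN (svalP psi)).
exists (box_witness HR HN k m s); split.
  rewrite val -natr1; have := floor_err_sum_le s (fun a => k%:R * sval phi a).
  lra.
move=> psi; rewrite val => psi_neg; apply/W_U/box_W => a a_s.
apply: (lt_le_trans (floor_approx_close (size s) k_gt0 _)); last first.
  by rewrite ler_pdivrMr // mulrC -ler_pdivrMr // ltW.
have := ler_term_sum (fun x => sqr_ge0 (k%:R * sval psi x - (m x)%:~R)) a_s.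
lra.
Qed.
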